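(* Let $D\subset\mathbb R^d$ be a domain, $V=H_0^1(D)$, $\mathcal V=L_2(Y,V,\sigma)$, and let $B\colon\mathcal V\to\mathcal V'$ be given by $\langle Bv,w\rangle=\sum_{\nu\in\mathcal F}\sum_{\nu'\in\mathcal F}\int_D[a]_{\nu\nu'}\nabla[v]_{\nu'}\cdot\nabla[w]_\nu\,dx$ with functions $[a]_{\nu\nu'}\in L_\infty(D)$ satisfying $[a]_{\nu\nu'}=[a]_{\nu'\nu}$. Then $\|B\|_{\mathcal V\to\mathcal V'}\le\max_{\nu\in\mathcal F}\Bigl\|\sum_{\nu'\in\mathcal F}|[a]_{\nu\nu'}|\Bigr\|_{L_\infty(D)}.$
   Context: $Y=[-1,1]^{\mathcal M}$ for a countable index set $\mathcal M$, $\sigma$ the uniform product probability measure on $Y$, $\mathcal F=\{\nu\in\mathbb N_0^{\mathcal M}:\#\operatorname{supp}\nu<\infty\}$, $L_\nu(y)=\prod_\mu L_{\nu_\mu}(y_\mu)$ with $L_k$ the Legendre polynomials orthonormal w.r.t. $dy/2$ on $[-1,1]$, and $[v]_\nu=\int_Y v(y)L_\nu(y)\,d\sigma(y)$. The norm on $\mathcal V$ is $\|v\|_{\mathcal V}^2=\sum_\nu\|\nabla[v]_\nu\|_{L_2(D)}^2$. *)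

From HB Require Import structures.
From mathcomp Require Import all_boot all_order all_algebra.
From mathcomp Require Import all_classical all_reals all_analysis.
From mathcomp Require Import ess_sup_inf.
Set Implicit Arguments. Unset Strict Implicit. Unset Printing Implicit Defensive.
Import Order.TTheory GRing.Theory Num.Theory.
Local Open Scope classical_set_scope.
Local Open Scope ring_scope.

Definition mindices (M : countType) : set (M -> nat) :=
  [set nu | finite_set [set m | nu m != 0%N]].

Arguments mindices : clear implicits.

(* Signed sum of a family of extended reals over a set
   (meaningful for absolutely summable families):
   sum of positive parts minus sum of negative parts. *)
Definition ssum (T : choiceType) (R : realType) (S : set T) (f : T -> \bar R)
  : \bar R :=
  (\esum_(i in S) (f^\+ i) - \esum_(i in S) (f^\- i))%E.

Section defs.
Context (R : realType) (dX : measure_display) (X : measurableType dX)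
  (mu : {measure set X -> \bar R}) (d : nat) (M : countType).

Definition dotd (u v : 'I_d -> R) : R := \sum_(i < d) u i * v i.

Definition L2field (g : X -> 'I_d -> R) : Prop :=
  (forall i, measurable_fun [set: X] (fun x => g x i)) /\
  (\int[mu]_x ((dotd (g x) (g x))%:E) < +oo)%E.

(* A family of gradients ( grad [v]_nu )_{nu in F}; its squared V-norm is
   sum_nu || grad [v]_nu ||_{L2(D)}^2. *)
Definition sqnormV (G : (M -> nat) -> X -> 'I_d -> R) : \bar R :=
  (\esum_(nu in mindices M) \int[mu]_x ((dotd (G nu x) (G nu x))%:E))%E.

Definition normV (G : (M -> nat) -> X -> 'I_d -> R) : R :=
  Num.sqrt (fine (sqnormV G)).

Definition Linfty (f : X -> R) : Prop :=
  measurable_fun [set: X] f /\ (ess_sup mu (fun x => (`|f x|)%:E) < +oo)%E.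

Definition schur_bound (a : (M -> nat) -> (M -> nat) -> X -> R) : \bar R :=
  ereal_sup [set ess_sup mu (fun x =>
                  (\esum_(nu' in mindices M) (`|a nu nu' x|)%:E)%E)
            | nu in mindices M].

Definition Bterm (a : (M -> nat) -> (M -> nat) -> X -> R)
  (Gv Gw : (M -> nat) -> X -> 'I_d -> R) (p : (M -> nat) * (M -> nat)) : \bar R :=
  (\int[mu]_x ((a p.1 p.2 x * dotd (Gv p.2 x) (Gw p.1 x))%:E))%E.

Definition Bform (a : (M -> nat) -> (M -> nat) -> X -> R)
  (Gv Gw : (M -> nat) -> X -> 'I_d -> R) : \bar R :=
  ssum (mindices M `*` mindices M) (Bterm a Gv Gw).

End defs.

(* For every t > 0, pointwise AM-GM gives
     |a_{nu nu'} grad[v]_nu' . grad[w]_nu|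
       <= |a_{nu nu'}| (t |grad[v]_nu'|^2 + t^-1 |grad[w]_nu|^2) / 2.
   Integrating and summing over (nu, nu'), the first term is controlled by the
   column sums sum_nu |a_{nu nu'}| and the second by the row sums
   sum_nu' |a_{nu nu'}|; by symmetry both are bounded a.e. by the Schur
   constant c, so sum |<B-terms>| <= c (t ||v||^2 + t^-1 ||w||^2) / 2, and the
   infimum over t is c ||v|| ||w||. *)
From HB Require Import structures.
From mathcomp Require Import all_boot all_order all_algebra.
From mathcomp Require Import all_classical all_reals all_analysis.
From mathcomp Require Import ess_sup_inf measurable_realfun.
From mathcomp Require Import ring lra.
Set Implicit Arguments.
Unset Strict Implicit.
Unset Printing Implicit Defensive.
Import Order.TTheory GRing.Theory Num.Theory numFieldNormedType.Exports.
Local Open Scope classical_set_scope.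
Local Open Scope ring_scope.

Lemma ler_norm_mul_amgm (R : realFieldType) (t x y : R) : 0 < t ->
  `|x * y| <= (t * x ^+ 2 + t^-1 * y ^+ 2) / 2.
Proof.
move=> t0; have tV : t * t^-1 = 1 by rewrite mulfV ?gt_eqF.
have tV0 : 0 < t^-1 by rewrite invr_gt0.
rewrite normrM -[x ^+ 2]real_normK ?num_real // -[y ^+ 2]real_normK ?num_real //.
have := sqr_ge0 (t * `|x| - `|y|); have := normr_ge0 x; have := normr_ge0 y.
nra.
Qed.

Lemma ler_amgm_inf (R : realType) (c A B e : R) : 0 <= c -> 0 <= A -> 0 <= B ->
  (forall t, 0 < t -> e <= c * ((t * A + t^-1 * B) / 2)) ->
  e <= c * (Num.sqrt A * Num.sqrt B).
Proof.
move=> c0 A0 B0 amgm.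
set α := Num.sqrt A; set β := Num.sqrt B.
have α0 : 0 <= α := sqrtr_ge0 A; have β0 : 0 <= β := sqrtr_ge0 B.
have shifted_bound δ : 0 < δ -> e <= c * ((α + δ) * (β + δ)).
  move=> δ0; have αδ : 0 < α + δ by rewrite ltr_wpDl.
  have βδ : 0 < β + δ by rewrite ltr_wpDl.
  apply: (le_trans (amgm _ (divr_gt0 βδ αδ))); rewrite ler_wpM2l //.
  rewrite -(sqr_sqrtr A0) -(sqr_sqrtr B0) -/α -/β invf_div.
  (* the optimal [t = β / α], with [α, β] shifted by [δ] so that it exists *)
  have -> : (α + δ) * (β + δ) = ((β + δ) / (α + δ) * (α + δ) ^+ 2 +
                                (α + δ) / (β + δ) * (β + δ) ^+ 2) / 2.
    by field; rewrite !gt_eqF.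
  by rewrite ler_pM2r // lerD // ler_wpM2l ?divr_ge0 ?ltW //; nra.
have shifted_cvg :
    c * ((α + δ) * (β + δ)) @[δ --> (0 : R)^'+] --> c * ((α + 0) * (β + 0)).
  apply: cvg_at_right_filter; apply: cvgM; first exact: cvg_cst.
  by apply: cvgM; apply: cvgD; exact: cvg_cst || exact: cvg_id.
rewrite !addr0 in shifted_cvg.
rewrite -(cvg_lim _ shifted_cvg) //; apply: limr_ge; first exact/cvgP/shifted_cvg.
by near=> δ; apply: shifted_bound.
Unshelve. all: by end_near.
Qed.

Section dotd.
Variables (R : realType) (d : nat).
Implicit Types u v : 'I_d -> R.

Lemma dotd_ge0 u : 0 <= dotd u u.
Proof. by apply: sumr_ge0 => i _; rewrite -expr2 sqr_ge0. Qed.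

Lemma dotdC u v : dotd u v = dotd v u.
Proof. by apply: eq_bigr => i _; rewrite mulrC. Qed.

Lemma ler_norm_dotd_amgm t u v : 0 < t ->
  `|dotd u v| <= (t * dotd u u + t^-1 * dotd v v) / 2.
Proof.
move=> t0; apply: (le_trans (ler_norm_sum _ _ _)).
rewrite /dotd mulr_sumr mulr_sumr -big_split mulr_suml /=.
by apply: ler_sum => i _; rewrite -!expr2; apply: ler_norm_mul_amgm.
Qed.

Lemma ler_norm_dotd u v : `|dotd u v| <= Num.sqrt (dotd u u) * Num.sqrt (dotd v v).
Proof.
rewrite -[leLHS]mul1r -[leRHS]mul1r.
apply: ler_amgm_inf; rewrite ?dotd_ge0 // => t t0.
by rewrite !mul1r; exact: ler_norm_dotd_amgm.
Qed.

Lemma dotd_eq0l u v : dotd u u = 0 -> dotd u v = 0.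
Proof.
move=> uu0; apply/normr0_eq0/le_anti; rewrite normr_ge0 andbT.
by apply: le_trans (ler_norm_dotd u v) _; rewrite uu0 sqrtr0 mul0r.
Qed.

Lemma dotd_eq0r u v : dotd v v = 0 -> dotd u v = 0.
Proof. by rewrite dotdC; apply: dotd_eq0l. Qed.

End dotd.

Section esum_bounds.
Local Open Scope ereal_scope.
Variable R : realType.

Lemma abse_ssum_le (T : choiceType) (S : set T) (f : T -> \bar R) :
  `|ssum S f| <= \esum_(i in S) `|f i|.
Proof.
rewrite /ssum; apply: le_trans (lee_abs_sub _ _) _.
rewrite !gee0_abs ?esum_ge0 // -esumD //.
by apply: le_esum => i _; have /= <- := congr1 (fun g => g i) (fune_abse f).
Qed.

Lemma sum_le_esum (T : choiceType) (S : set T) (s : seq T) (f : T -> \bar R) :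
  uniq s -> {subset s <= S} -> \sum_(i <- s) f i <= \esum_(i in S) f i.
Proof.
move=> us sS; apply: esum_ge; exists [set` s]; last by rewrite fsbig_seq.
by split; [exact: finite_seq | move=> i /sS /set_mem].
Qed.

Lemma esum_setX_le (T1 T2 : choiceType) (S1 : set T1) (S2 : set T2)
    (f : T1 * T2 -> \bar R) (B : \bar R) : (forall p, 0 <= f p) ->
  (forall s1 s2, uniq s1 -> uniq s2 -> {subset s1 <= S1} -> {subset s2 <= S2} ->
     \sum_(i <- s1) \sum_(j <- s2) f (i, j) <= B) ->
  \esum_(p in S1 `*` S2) f p <= B.
Proof.
move=> f0 rectB; apply: ge_ereal_sup => _ [A [finA AS] <-].
have fin1 : finite_set (fst @` A) := finite_image _ finA.
have fin2 : finite_set (snd @` A) := finite_image _ finA.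
apply: (@le_trans _ _ (\sum_(p \in (fst @` A) `*` (snd @` A)) f p)).
  apply: lee_fsum_nneg_subset => //; first exact: finite_setX.
  by move=> [i j] /set_mem Aij; apply/mem_set; split; exists (i, j).
rewrite (eq_fsbigr (fun p => f (p.1, p.2))); last by case.
rewrite -(pair_fsbig _ (fun i j => f (i, j))) // fsbig_finite //=.
under eq_bigr do rewrite fsbig_finite //=.
apply: rectB; try exact: finmap.fset_uniq.
  by move=> i; rewrite in_fset_set // => /set_mem [p /AS [+ _] <-]; exact: mem_set.
by move=> j; rewrite in_fset_set // => /set_mem [p /AS [_ +] <-]; exact: mem_set.
Qed.

End esum_bounds.

Section integral_lemmas.
Local Open Scope ereal_scope.
Context (R : realType) (dX : measure_display) (X : measurableType dX)
  (mu : {measure set X -> \bar R}).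

Lemma ae_forall_in_seq (I : eqType) (s : seq I) (P : I -> X -> Prop) :
  (forall i, i \in s -> {ae mu, forall x, P i x}) ->
  {ae mu, forall x, forall i, i \in s -> P i x}.
Proof.
elim: s => [|i s IH] aeP; first by apply: aeW => x i; rewrite in_nil.
have aePi := aeP i (mem_head _ _).
have aePs := IH (fun j js => aeP j (mem_behead (js : j \in behead (i :: s)))).
by apply: filterS2 aePi aePs => x Pi Ps j; rewrite in_cons => /predU1P[->|/Ps].
Qed.

Section sum_in_seq.
Variables (I : eqType) (s : seq I) (f : I -> X -> \bar R).
Hypothesis mf : forall i, i \in s -> measurable_fun [set: X] (f i).

Let g i := if i \in s then f i else cst 0.

Let mg i : measurable_fun [set: X] (g i).
Proof. by rewrite /g; case: ifP => si; [exact: mf | exact: measurable_cst]. Qed.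

Let sum_gE x : \sum_(i <- s) g i x = \sum_(i <- s) f i x.
Proof. by rewrite big_seq [RHS]big_seq; apply: eq_bigr => i si; rewrite /g si. Qed.

Lemma emeasurable_sum_in : measurable_fun [set: X] (fun x => \sum_(i <- s) f i x).
Proof. by under eq_fun do rewrite -sum_gE; exact: emeasurable_sum. Qed.

Lemma ge0_integral_sum_in : (forall i x, i \in s -> 0 <= f i x) ->
  \int[mu]_x (\sum_(i <- s) f i x) = \sum_(i <- s) \int[mu]_x f i x.
Proof.
move=> f0; under eq_integral do rewrite -sum_gE.
rewrite ge0_integral_sum //; last by move=> i x _; rewrite /g; case: ifP => si; [exact: f0 |].
rewrite big_seq [RHS]big_seq; apply: eq_bigr => i si.
by apply: eq_integral => x _; rewrite /g si.
Qed.

End sum_in_seq.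

Lemma measurable_dotd (d : nat) (u v : X -> 'I_d -> R) :
  (forall k, measurable_fun [set: X] (fun x => u x k)) ->
  (forall k, measurable_fun [set: X] (fun x => v x k)) ->
  measurable_fun [set: X] (fun x => dotd (u x) (v x)).
Proof.
by move=> mU mV; apply: measurable_sum => k; exact: measurable_funM.
Qed.

End integral_lemmas.

Section sqnormV.
Local Open Scope ereal_scope.
Context (R : realType) (dX : measure_display) (X : measurableType dX)
  (mu : {measure set X -> \bar R}) (d : nat) (M : countType).
Local Notation F := (mindices M).
Variable G : (M -> nat) -> X -> 'I_d -> R.

Lemma sqnormV_ge0 : 0 <= sqnormV mu G.
Proof.
by apply: esum_ge0 => i _; apply: integral_ge0 => x _; rewrite lee_fin dotd_ge0.
Qed.

Lemma sqnormV_fin_num : sqnormV mu G < +oo -> sqnormV mu G \is a fin_num.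
Proof. by rewrite ge0_fin_numE // sqnormV_ge0. Qed.

Lemma normV_eq0 : sqnormV mu G < +oo -> normV mu G = 0%R -> sqnormV mu G = 0.
Proof.
move=> /sqnormV_fin_num/fineK <- /eqP; rewrite sqrtr_eq0 => G0.
by congr EFin; apply/le_anti; rewrite G0 fine_ge0 ?sqnormV_ge0.
Qed.

Hypothesis mG : forall i k, F i -> measurable_fun [set: X] (fun x => G i x k).

Let measurable_sqG i : F i -> measurable_fun [set: X] (fun x => dotd (G i x) (G i x)).
Proof. by move=> iF; apply: measurable_dotd => k; exact: mG. Qed.

Lemma sqnormV_null : mu [set: X] = 0 -> sqnormV mu G = 0.
Proof.
move=> mu0; apply: esum1 => i iF.
by apply: null_set_integral => //; apply/measurable_EFinP; exact: measurable_sqG.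
Qed.

Lemma sqnormV_eq0_ae i : F i -> sqnormV mu G = 0 ->
  {ae mu, forall x, dotd (G i x) (G i x) = 0%R}.
Proof.
move=> iF G0.
have mGi : measurable_fun [set: X] (fun x => (dotd (G i x) (G i x))%:E).
  by apply/measurable_EFinP; exact: measurable_sqG.
suff : \int[mu]_x `|(dotd (G i x) (G i x))%:E| = 0.
  by move/(ae_eq_integral_abs mu measurableT mGi); apply: filterS => x /(_ I) [].
apply/le_anti; rewrite integral_ge0 // andbT -G0.
under eq_integral do rewrite gee0_abs ?lee_fin ?dotd_ge0 //.
apply: esum_ge; exists [set i]; last by rewrite fsbig_set1.
by split; [exact: finite_set1 | move=> j ->].
Qed.

Lemma sum_weighted_sqnormV_le (b : (M -> nat) -> (M -> nat) -> X -> R) (c : R)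
    (s1 s2 : seq (M -> nat)) : (0 <= c)%R ->
  (forall i j, F i -> F j -> measurable_fun [set: X] (b i j)) ->
  (forall i j x, 0 <= b i j x)%R ->
  uniq s2 -> {subset s1 <= F} -> {subset s2 <= F} ->
  (forall j, j \in s2 -> {ae mu, forall x, \sum_(i <- s1) b i j x <= c}%R) ->
  \sum_(j <- s2) \sum_(i <- s1) \int[mu]_x (b i j x * dotd (G j x) (G j x))%:E
    <= c%:E * sqnormV mu G.
Proof.
move=> c0 mb b0 us2 s1F s2F bc.
have sqG_ge0 j x : 0 <= (dotd (G j x) (G j x))%:E by rewrite lee_fin dotd_ge0.
apply: (@le_trans _ _ (\sum_(j <- s2) c%:E * \int[mu]_x (dotd (G j x) (G j x))%:E)).
  rewrite big_seq [leRHS]big_seq; apply: lee_sum => j /[dup] js2 /s2F /set_mem jF.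
  have mbG i : i \in s1 ->
      measurable_fun [set: X] (fun x => (b i j x * dotd (G j x) (G j x))%:E).
    move=> /s1F /set_mem iF; apply/measurable_EFinP/measurable_funM; first exact: mb.
    exact: measurable_sqG.
  have bG_ge0 i x : 0 <= (b i j x * dotd (G j x) (G j x))%:E.
    by rewrite lee_fin mulr_ge0 ?dotd_ge0.
  rewrite -ge0_integral_sum_in // -ge0_integralZl_EFin //; last first.
    exact/measurable_EFinP/measurable_sqG.
  apply: ae_ge0_le_integral => //.
  - by move=> x _; apply: sume_ge0.
  - exact: emeasurable_sum_in.
  - by move=> x _; rewrite mule_ge0 ?lee_fin ?dotd_ge0.
  - exact/measurable_funeM/measurable_EFinP/measurable_sqG.
  apply: filterS (bc j js2) => x bc_x _.
  by rewrite sumEFin -mulr_suml -EFinM lee_fin ler_wpM2r ?dotd_ge0.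
rewrite -ge0_sume_distrr; last by move=> j _; apply: integral_ge0.
by rewrite lee_wpmul2l ?lee_fin // sum_le_esum.
Qed.

End sqnormV.

Section schur_test.
Local Open Scope ereal_scope.
Context (R : realType) (dX : measure_display) (X : measurableType dX)
  (mu : {measure set X -> \bar R}) (d : nat) (M : countType).
Local Notation F := (mindices M).
Variables (a : (M -> nat) -> (M -> nat) -> X -> R)
  (Gv Gw : (M -> nat) -> X -> 'I_d -> R).
Hypothesis ma : forall i j, F i -> F j -> measurable_fun [set: X] (a i j).
Hypothesis mGv : forall i k, F i -> measurable_fun [set: X] (fun x => Gv i x k).
Hypothesis mGw : forall i k, F i -> measurable_fun [set: X] (fun x => Gw i x k).

Let measurable_Bterm_integrand i j : F i -> F j ->
  measurable_fun [set: X] (fun x => (a i j x * dotd (Gv j x) (Gw i x))%:E).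
Proof.
move=> iF jF; apply/measurable_EFinP/measurable_funM; first exact: ma.
by apply: measurable_dotd => k; [exact: mGv | exact: mGw].
Qed.

Lemma esum_abse_Bterm_eq0 : sqnormV mu Gv = 0 \/ sqnormV mu Gw = 0 ->
  \esum_(p in F `*` F) `|Bterm mu a Gv Gw p| = 0.
Proof.
move=> G0; apply: esum1 => -[i j] [/= iF jF]; apply/eqP; rewrite abse_eq0; apply/eqP.
rewrite /Bterm /= (ae_eq_integral (cst 0)) ?integral0 //; first exact: measurable_Bterm_integrand.
case: G0 => /sqnormV_eq0_ae G0.
  by apply: filterS (G0 mGv j jF) => x vv0 _; rewrite /= dotd_eq0l ?mulr0.
by apply: filterS (G0 mGw i iF) => x ww0 _; rewrite /= dotd_eq0r ?mulr0.
Qed.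

Lemma abse_Bterm_le_amgm t i j : (0 < t)%R -> F i -> F j ->
  `|Bterm mu a Gv Gw (i, j)| <=
  \int[mu]_x (t / 2 * `|a i j x| * dotd (Gv j x) (Gv j x))%:E +
  \int[mu]_x (t^-1 / 2 * `|a i j x| * dotd (Gw i x) (Gw i x))%:E.
Proof.
move=> t0 iF jF.
have t2_ge0 : (0 <= t / 2)%R by rewrite divr_ge0 ?ltW.
have tV2_ge0 : (0 <= t^-1 / 2)%R by rewrite divr_ge0 ?invr_ge0 ?ltW.
have m_weighted (s : R) (G : X -> 'I_d -> R) :
    (forall k, measurable_fun [set: X] (fun x => G x k)) ->
    measurable_fun [set: X] (fun x => (s * `|a i j x| * dotd (G x) (G x))%:E).
  move=> mG; apply/measurable_EFinP/measurable_funM; last exact: measurable_dotd.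
  exact/measurable_funM/measurableT_comp/ma.
have weighted_ge0 (s : R) (G : X -> 'I_d -> R) x :
    (0 <= s)%R -> 0 <= (s * `|a i j x| * dotd (G x) (G x))%:E.
  by move=> s0; rewrite lee_fin !mulr_ge0 ?dotd_ge0.
have mv := m_weighted (t / 2)%R _ (fun k => mGv k jF).
have mw := m_weighted (t^-1 / 2)%R _ (fun k => mGw k iF).
rewrite -ge0_integralD //; first last.
- by move=> x _; exact: weighted_ge0.
- by move=> x _; exact: weighted_ge0.
apply: le_trans (le_abse_integral _ _ (measurable_Bterm_integrand iF jF)) _ => //.
apply: ge0_le_integral => //.
- apply: (measurableT_comp (f := abse)) => //; exact: measurable_Bterm_integrand.
- exact: emeasurable_funD mv mw.
move=> x _; rewrite -EFinD lee_fin normrM.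
rewrite (_ : (_ + _ = `|a i j x| * ((t * dotd (Gv j x) (Gv j x) +
                          t^-1 * dotd (Gw i x) (Gw i x)) / 2))%R); last by ring.
by apply: ler_wpM2l => //; exact: ler_norm_dotd_amgm.
Qed.

Hypothesis a_sym : forall i j, F i -> F j -> {ae mu, forall x, a i j x = a j i x}.
Variable c : R.
Hypothesis c0 : (0 <= c)%R.
Hypothesis a_schur : schur_bound mu a <= c%:E.

Lemma ae_row_sum_le i s : F i -> uniq s -> {subset s <= F} ->
  {ae mu, forall x, \sum_(j <- s) `|a i j x| <= c}%R.
Proof.
move=> iF us sF.
have : ess_sup mu (fun x => \esum_(j in F) (`|a i j x|)%:E) <= c%:E.
  by apply: le_trans a_schur; apply: ereal_sup_ubound; exists i.
move/ess_supP; apply: filterS => x row_le.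
by rewrite -lee_fin -sumEFin; apply: le_trans row_le; exact: sum_le_esum.
Qed.

Lemma ae_col_sum_le j s : F j -> uniq s -> {subset s <= F} ->
  {ae mu, forall x, \sum_(i <- s) `|a i j x| <= c}%R.
Proof.
move=> jF us sF.
have a_sym_s := ae_forall_in_seq (fun i si => a_sym (set_mem (sF i si)) jF).
apply: filterS2 (ae_row_sum_le jF us sF) a_sym_s => x row_le sym.
by rewrite big_seq (eq_bigr (fun i => `|a j i x|%R)) -?big_seq // => i /sym ->.
Qed.

Lemma sum_abse_Bterm_le t s1 s2 : (0 < t)%R -> uniq s1 -> uniq s2 ->
  {subset s1 <= F} -> {subset s2 <= F} ->
  \sum_(i <- s1) \sum_(j <- s2) `|Bterm mu a Gv Gw (i, j)| <=
  (t / 2 * c)%:E * sqnormV mu Gv + (t^-1 / 2 * c)%:E * sqnormV mu Gw.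
Proof.
move=> t0 us1 us2 s1F s2F.
have t2_ge0 : (0 <= t / 2)%R by rewrite divr_ge0 ?ltW.
have tV2_ge0 : (0 <= t^-1 / 2)%R by rewrite divr_ge0 ?invr_ge0 ?ltW.
have m_scaled (s : R) i j : F i -> F j ->
    measurable_fun [set: X] (fun x => s * `|a i j x|)%R.
  by move=> iF jF; apply/measurable_funM/measurableT_comp/ma.
apply: (@le_trans _ _
  (\sum_(i <- s1) \sum_(j <- s2)
      \int[mu]_x (t / 2 * `|a i j x| * dotd (Gv j x) (Gv j x))%:E +
   \sum_(i <- s1) \sum_(j <- s2)
      \int[mu]_x (t^-1 / 2 * `|a i j x| * dotd (Gw i x) (Gw i x))%:E)).
  rewrite -big_split !big_seq; apply: lee_sum => i /s1F /set_mem iF.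
  rewrite -big_split !big_seq; apply: lee_sum => j /s2F /set_mem jF.
  exact: abse_Bterm_le_amgm.
apply: leeD; first rewrite exchange_big /=.
- apply: (sum_weighted_sqnormV_le mGv (b := fun i j x => t / 2 * `|a i j x|)%R) => //.
  + exact: mulr_ge0.
  + by move=> i j iF jF; exact: m_scaled.
  + by move=> i j x; exact: mulr_ge0.
  + move=> j /s2F /set_mem jF; apply: filterS (ae_col_sum_le jF us1 s1F) => x col.
    by rewrite -mulr_sumr ler_wpM2l.
- apply: (sum_weighted_sqnormV_le mGw (b := fun j i x => t^-1 / 2 * `|a i j x|)%R) => //.
  + exact: mulr_ge0.
  + by move=> j i jF iF; exact: m_scaled.
  + by move=> j i x; exact: mulr_ge0.
  + move=> i /s1F /set_mem iF; apply: filterS (ae_row_sum_le iF us2 s2F) => x row.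
    by rewrite -mulr_sumr ler_wpM2l.
Qed.

Lemma esum_abse_Bterm_le_amgm t : (0 < t)%R ->
  \esum_(p in F `*` F) `|Bterm mu a Gv Gw p| <=
  (t / 2 * c)%:E * sqnormV mu Gv + (t^-1 / 2 * c)%:E * sqnormV mu Gw.
Proof.
move=> t0; apply: esum_setX_le => [p|s1 s2 us1 us2 s1F s2F]; first exact: abse_ge0.
exact: sum_abse_Bterm_le.
Qed.

Lemma esum_abse_Bterm_le : sqnormV mu Gv < +oo -> sqnormV mu Gw < +oo ->
  \esum_(p in F `*` F) `|Bterm mu a Gv Gw p| <= (c * (normV mu Gv * normV mu Gw))%:E.
Proof.
move=> /sqnormV_fin_num/fineK Vfin /sqnormV_fin_num/fineK Wfin.
rewrite /normV; set v := fine (sqnormV mu Gv) in Vfin *; set w := fine (sqnormV mu Gw) in Wfin *.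
set E := \esum_(p in _) _.
have amgm t : (0 < t)%R -> E <= (c * ((t * v + t^-1 * w) / 2))%:E.
  move=> t0; apply: le_trans (esum_abse_Bterm_le_amgm t0) _.
  rewrite -Vfin -Wfin -!EFinM -EFinD.
  by have -> : (t / 2 * c * v + t^-1 / 2 * c * w = c * ((t * v + t^-1 * w) / 2))%R by ring.
have E_fin : E \is a fin_num.
  by rewrite ge0_fin_numE ?esum_ge0 //; apply: le_lt_trans (amgm 1%R ltr01) _; exact: ltry.
rewrite -(fineK E_fin) lee_fin; apply: ler_amgm_inf => // [||t t0].
- by rewrite fine_ge0 // sqnormV_ge0.
- by rewrite fine_ge0 // sqnormV_ge0.
- by rewrite -lee_fin fineK //; exact: amgm.
Qed.

End schur_test.

Lemma mindices0 (M : countType) : mindices M (fun _ => 0%N).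
Proof. by apply: sub_finite_set (finite_set0 M) => m /= /eqP. Qed.

Lemma schur_bound_lt0_null (R : realType) (dX : measure_display)
    (X : measurableType dX) (mu : {measure set X -> \bar R}) (M : countType)
    (a : (M -> nat) -> (M -> nat) -> X -> R) :
  (schur_bound mu a < 0)%E -> mu [set: X] = 0%E.
Proof.
move=> C_lt0.
have [N [mN N0 TN]] : {ae mu, forall x : X, False}.
  have : (ess_sup mu (fun x => \esum_(j in mindices M) (`|a (fun _ => 0%N) j x|)%:E)
           <= schur_bound mu a)%E.
    by apply: ereal_sup_ubound; exists (fun _ => 0%N) => //; exact: mindices0.
  move/ess_supP; apply: filterS => x row_le.
  have row_ge0 : (0 <= \esum_(j in mindices M) (`|a (fun _ => 0%N) j x|)%:E)%E.
    by apply: esum_ge0 => j _; rewrite lee_fin.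
  by have := le_lt_trans (le_trans row_ge0 row_le) C_lt0; rewrite ltxx.
apply/le_anti; rewrite measure_ge0 andbT -N0 le_measure ?inE //.
by move=> x _; exact: TN x id.
Qed.

Theorem lemma3p2 (R : realType) (dX : measure_display) (X : measurableType dX)
  (mu : {measure set X -> \bar R}) (d : nat) (M : countType)
  (a : (M -> nat) -> (M -> nat) -> X -> R)
  (ha : forall nu nu', nu \in mindices M -> nu' \in mindices M ->
          Linfty mu (a nu nu'))
  (hsym : forall nu nu', nu \in mindices M -> nu' \in mindices M ->
          {ae mu, forall x, a nu nu' x = a nu' nu x})
  (Gv Gw : (M -> nat) -> X -> 'I_d -> R)
  (hGv : forall nu, nu \in mindices M -> L2field mu (Gv nu))
  (hGw : forall nu, nu \in mindices M -> L2field mu (Gw nu))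
  (hv : (sqnormV mu Gv < +oo)%E) (hw : (sqnormV mu Gw < +oo)%E) :
  ((schur_bound mu a < +oo)%E ->
     summable (mindices M `*` mindices M) (Bterm mu a Gv Gw)) /\
  (`| Bform mu a Gv Gw | <= schur_bound mu a * (normV mu Gv * normV mu Gw)%:E)%E.
Proof.
have ma i j : mindices M i -> mindices M j -> measurable_fun [set: X] (a i j).
  by move=> /mem_set iF /mem_set jF; case: (ha i j iF jF).
have a_sym i j : mindices M i -> mindices M j -> {ae mu, forall x, a i j x = a j i x}.
  by move=> /mem_set iF /mem_set jF; exact: hsym.
have mGv i k : mindices M i -> measurable_fun [set: X] (fun x => Gv i x k).
  by move=> /mem_set /hGv [].
have mGw i k : mindices M i -> measurable_fun [set: X] (fun x => Gw i x k).
  by move=> /mem_set /hGw [].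
have Bform_le := abse_ssum_le (mindices M `*` mindices M) (Bterm mu a Gv Gw).
(* [schur_bound mu a] may be infinite and [+oo * 0 = 0], hence this case. *)
have [p0|p_neq0] := eqVneq (normV mu Gv * normV mu Gw) 0.
  have E0 : (\esum_(p in mindices M `*` mindices M) `|Bterm mu a Gv Gw p| = 0)%E.
    apply: esum_abse_Bterm_eq0 => //.
    by move/eqP: p0; rewrite mulf_eq0 => /orP[] /eqP ?; [left | right]; exact: normV_eq0.
  by split; [rewrite /summable E0 | rewrite p0 mule0 -E0].
have C_ge0 : (0 <= schur_bound mu a)%E.
  rewrite leNgt; apply/negP => /schur_bound_lt0_null mu0.
  by move: p_neq0; rewrite /normV sqnormV_null // sqrtr0 mul0r eqxx.
case eC : (schur_bound mu a) C_ge0 => [r| |] // r0; last first.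
  split; first by rewrite ltxx.
  by rewrite gt0_mulye ?leey // lte_fin lt_def p_neq0 mulr_ge0 // sqrtr_ge0.
rewrite lee_fin in r0.
have C_le : (schur_bound mu a <= r%:E)%E by rewrite eC.
have E_le := esum_abse_Bterm_le ma mGv mGw a_sym r0 C_le hv hw.
split=> [_|]; first exact: le_lt_trans E_le (ltry _).
exact: le_trans Bform_le E_le.
Qed.
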